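(* Let $n\ge1$, $0<\hat\theta<1$ with $n\hat\theta$ an integer, and $\alpha>0$ with $\alpha\le n\hat\theta^2(1-\hat\theta)^2/8$. Then there is a solution $\gamma_\alpha>0$ of $-\log P_{\mathrm{CH},n}\big(\hat\theta\,\big|\,\varphi(\gamma_\alpha,\hat\theta)\big)=\alpha$ satisfying $$\gamma_\alpha\in\sqrt{2\alpha}\left(1+\frac52\frac{\sqrt\alpha}{\sqrt{n\hat\theta(1-\hat\theta)}}[-1,1]\right)^{-1/2},$$ i.e. $\sqrt{2\alpha}\,(1+\epsilon)^{-1/2}\le\gamma_\alpha\le\sqrt{2\alpha}\,(1-\epsilon)^{-1/2}$ with $\epsilon=\frac52\sqrt\alpha/\sqrt{n\hat\theta(1-\hat\theta)}$.
   Context: Logarithms are natural. $P_{\mathrm{CH},n}(t|\varphi)=\left(\frac{\varphi}{t}\right)^{nt}\left(\frac{1-\varphi}{1-t}\right)^{n(1-t)}$ if $t\ge\varphi$, and $=1$ otherwise. With $\hat\sigma=\sqrt{\hat\theta(1-\hat\theta)/n}$, $\varphi(\gamma,\hat\theta)=\hat\theta-\hat\sigma\gamma$. *)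

From Stdlib Require Import Reals.
Open Scope R_scope.

Definition P_CH (n : nat) (t phi : R) : R :=
  if Rle_dec phi t then
    Rpower (phi / t) (INR n * t) * Rpower ((1 - phi) / (1 - t)) (INR n * (1 - t))
  else 1.

Definition sigma_hat (n : nat) (theta : R) : R := sqrt (theta * (1 - theta) / INR n).

Definition varphi (n : nat) (gamma theta : R) : R := theta - sigma_hat n theta * gamma.

From Stdlib Require Import Reals Lra Psatz Ranalysis5.
From Coquelicot Require Import Coquelicot.
Open Scope R_scope.

(* Writing x = sigma_hat * gamma, -log P_CH is n times the Bernoulli divergence
   KL(theta || theta - x), which lies between x^2 / (2 theta (1 - theta + x)) and
   x^2 / (2 (1 - theta) (theta - x)).  Since n sigma_hat^2 = theta (1 - theta), this
   squeezes -log P_CH between (1 - eps) gamma^2 / 2 and (1 + eps) gamma^2 / 2 whenever x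
   is small against eps theta and eps (1 - theta).  The bound on alpha makes this hold
   at gamma = sqrt (2 alpha / (1 +- eps)), and the intermediate value theorem gives a
   solution in between. *)

Definition kl_bern (t p : R) : R :=
  - (t * ln (p / t) + (1 - t) * ln ((1 - p) / (1 - t))).

Lemma neg_ln_P_CH n t p : p <= t -> - ln (P_CH n t p) = INR n * kl_bern t p.
Proof.
  intros Hpt. unfold P_CH, kl_bern.
  destruct (Rle_dec p t) as [_|]; [|lra].
  unfold Rpower. rewrite <- exp_plus, ln_exp. ring.
Qed.

Lemma nonneg_of_derive_nonneg (h dh : R -> R) (x : R) :
  0 <= x -> h 0 = 0 ->
  (forall y, 0 <= y <= x -> is_derive h y (dh y)) ->
  (forall y, 0 <= y <= x -> 0 <= dh y) -> 0 <= h x.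
Proof.
  intros Hx H0 Hd Hdh.
  destruct (MVT_gen h 0 x dh) as [c [Hc Hmvt]];
    rewrite ?Rmin_left, ?Rmax_right in * by lra.
  - intros y Hy. apply Hd. lra.
  - intros y Hy. apply continuity_pt_filterlim, (ex_derive_continuous (V := R_NormedModule)).
    eexists. now apply Hd.
  - assert (0 <= dh c) by (apply Hdh; lra). nra.
Qed.

Lemma kl_bern_sub_le t x : 0 < t < 1 -> 0 <= x < t ->
  kl_bern t (t - x) <= x ^ 2 / (2 * (1 - t) * (t - x)).
Proof.
  intros Ht Hx.
  set (h := fun y => y ^ 2 / (2 * (1 - t) * (t - y)) - kl_bern t (t - y)).
  enough (0 <= h x) by (unfold h in *; lra).
  apply (nonneg_of_derive_nonneg h
    (fun c => c ^ 2 * (1 + t - c) / (2 * (1 - t) * (t - c) ^ 2 * (1 - t + c)))); [lra| | |].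
  - unfold h, kl_bern. rewrite !Rminus_0_r, !Rdiv_diag by lra. rewrite ln_1. field. lra.
  - intros y Hy. unfold h, kl_bern. auto_derive.
    + repeat split; try apply Rdiv_lt_0_compat; try lra.
      apply Rgt_not_eq, Rmult_lt_0_compat; lra.
    + field. repeat split; lra.
  - intros c Hc. apply Rmult_le_pos; [apply Rmult_le_pos; nra|].
    apply Rlt_le, Rinv_0_lt_compat. apply Rmult_lt_0_compat; [|lra].
    apply Rmult_lt_0_compat; [lra|]. nra.
Qed.

Lemma kl_bern_sub_ge t x : 0 < t < 1 -> 0 <= x < t ->
  x ^ 2 / (2 * t * (1 - t + x)) <= kl_bern t (t - x).
Proof.
  intros Ht Hx.
  set (h := fun y => kl_bern t (t - y) - y ^ 2 / (2 * t * (1 - t + y))).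
  enough (0 <= h x) by (unfold h in *; lra).
  apply (nonneg_of_derive_nonneg h
    (fun c => c ^ 2 * (2 - t + c) / (2 * t * (t - c) * (1 - t + c) ^ 2))); [lra| | |].
  - unfold h, kl_bern. rewrite !Rminus_0_r, !Rdiv_diag by lra. rewrite ln_1. field. lra.
  - intros y Hy. unfold h, kl_bern. auto_derive.
    + repeat split; try apply Rdiv_lt_0_compat; try lra.
      apply Rgt_not_eq, Rmult_lt_0_compat; lra.
    + field. repeat split; lra.
  - intros c Hc. apply Rmult_le_pos; [apply Rmult_le_pos; nra|].
    apply Rlt_le, Rinv_0_lt_compat. apply Rmult_lt_0_compat; [|nra].
    apply Rmult_lt_0_compat; lra.
Qed.

Lemma kl_bern_sub_le_quadratic t e x : 0 < t < 1 -> 0 <= x < t -> x * (1 + e) <= e * t ->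
  kl_bern t (t - x) <= (1 + e) * x ^ 2 / (2 * t * (1 - t)).
Proof.
  intros Ht Hx Hxe. eapply Rle_trans; [now apply kl_bern_sub_le|].
  assert (Hq : 0 <= x ^ 2 / (2 * (1 - t) * t * (t - x))).
  { apply Rdiv_le_0_compat; [nra|]. apply Rmult_lt_0_compat; [|lra]. nra. }
  assert (Hdiff : (1 + e) * x ^ 2 / (2 * t * (1 - t)) - x ^ 2 / (2 * (1 - t) * (t - x))
    = ((1 + e) * (t - x) - t) * (x ^ 2 / (2 * (1 - t) * t * (t - x)))) by (field; lra).
  assert (0 <= ((1 + e) * (t - x) - t) * (x ^ 2 / (2 * (1 - t) * t * (t - x))))
    by (apply Rmult_le_pos; lra).
  lra.
Qed.

Lemma kl_bern_sub_ge_quadratic t e x : 0 < t < 1 -> 0 <= x < t -> x * (1 - e) <= e * (1 - t) ->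
  (1 - e) * x ^ 2 / (2 * t * (1 - t)) <= kl_bern t (t - x).
Proof.
  intros Ht Hx Hxe. eapply Rle_trans; [|now apply kl_bern_sub_ge].
  assert (Hq : 0 <= x ^ 2 / (2 * t * (1 - t) * (1 - t + x))).
  { apply Rdiv_le_0_compat; [nra|]. apply Rmult_lt_0_compat; [|lra]. nra. }
  assert (Hdiff : x ^ 2 / (2 * t * (1 - t + x)) - (1 - e) * x ^ 2 / (2 * t * (1 - t))
    = (e * (1 - t) - x * (1 - e)) * (x ^ 2 / (2 * t * (1 - t) * (1 - t + x)))) by (field; lra).
  assert (0 <= (e * (1 - t) - x * (1 - e)) * (x ^ 2 / (2 * t * (1 - t) * (1 - t + x))))
    by (apply Rmult_le_pos; lra).
  lra.
Qed.

Lemma sigma_hat_pos n t : (1 <= n)%nat -> 0 < t < 1 -> 0 < sigma_hat n t.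
Proof.
  intros Hn Ht. apply sqrt_lt_R0, Rdiv_lt_0_compat; [nra|].
  apply lt_0_INR. lia.
Qed.

Lemma INR_mul_sigma_hat_sq n t : (1 <= n)%nat -> 0 < t < 1 ->
  INR n * sigma_hat n t ^ 2 = t * (1 - t).
Proof.
  intros Hn Ht. assert (HN : 0 < INR n) by (apply lt_0_INR; lia).
  unfold sigma_hat. rewrite <- Rsqr_pow2, Rsqr_sqrt.
  - field. lra.
  - apply Rlt_le, Rdiv_lt_0_compat; nra.
Qed.

Lemma neg_ln_P_CH_varphi n t g : 0 <= sigma_hat n t * g ->
  - ln (P_CH n t (varphi n g t)) = INR n * kl_bern t (t - sigma_hat n t * g).
Proof. intros Hg. apply neg_ln_P_CH. unfold varphi. lra. Qed.

Lemma neg_ln_P_CH_varphi_le n t e g : (1 <= n)%nat -> 0 < t < 1 ->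
  0 <= sigma_hat n t * g < t -> sigma_hat n t * g * (1 + e) <= e * t ->
  - ln (P_CH n t (varphi n g t)) <= (1 + e) * g ^ 2 / 2.
Proof.
  intros Hn Ht Hx Hxe. rewrite neg_ln_P_CH_varphi by lra.
  assert (HN : 0 < INR n) by (apply lt_0_INR; lia).
  eapply Rle_trans; [apply Rmult_le_compat_l; [lra|]; apply (kl_bern_sub_le_quadratic _ e); assumption|].
  right. pose proof (INR_mul_sigma_hat_sq n t Hn Ht) as Hv.
  replace ((1 + e) * g ^ 2 / 2)
    with ((1 + e) * g ^ 2 / 2 * (INR n * sigma_hat n t ^ 2 / (t * (1 - t)))).
  - field. lra.
  - rewrite Hv. field. lra.
Qed.

Lemma neg_ln_P_CH_varphi_ge n t e g : (1 <= n)%nat -> 0 < t < 1 ->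
  0 <= sigma_hat n t * g < t -> sigma_hat n t * g * (1 - e) <= e * (1 - t) ->
  (1 - e) * g ^ 2 / 2 <= - ln (P_CH n t (varphi n g t)).
Proof.
  intros Hn Ht Hx Hxe. rewrite neg_ln_P_CH_varphi by lra.
  assert (HN : 0 < INR n) by (apply lt_0_INR; lia).
  eapply Rle_trans; [|apply Rmult_le_compat_l; [lra|]; apply (kl_bern_sub_ge_quadratic _ e); assumption].
  right. pose proof (INR_mul_sigma_hat_sq n t Hn Ht) as Hv.
  replace ((1 - e) * g ^ 2 / 2)
    with ((1 - e) * g ^ 2 / 2 * (INR n * sigma_hat n t ^ 2 / (t * (1 - t)))).
  - field. lra.
  - rewrite Hv. field. lra.
Qed.

Lemma IVT_interv_le (f : R -> R) (a b : R) : a <= b ->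
  (forall y, a <= y <= b -> continuity_pt f y) -> f a <= 0 <= f b ->
  exists z, a <= z <= b /\ f z = 0.
Proof.
  intros Hab Hf [Ha Hb].
  destruct (Req_dec (f a) 0) as [Ea|Ea]; [exists a; split; [lra|exact Ea]|].
  destruct (Req_dec (f b) 0) as [Eb|Eb]; [exists b; split; [lra|exact Eb]|].
  destruct (Req_dec a b) as [<-|Nab]; [lra|].
  destruct (IVT_interv f a b Hf) as [z Hz]; [lra|lra|lra|].
  exists z. exact Hz.
Qed.

Lemma neg_ln_P_CH_varphi_intermediate n t y a b : 0 < t < 1 ->
  0 <= a <= b -> sigma_hat n t * b < t ->
  - ln (P_CH n t (varphi n a t)) <= y <= - ln (P_CH n t (varphi n b t)) ->
  exists g, a <= g <= b /\ - ln (P_CH n t (varphi n g t)) = y.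
Proof.
  intros Ht Hab Hb Hy.
  assert (Hs : 0 <= sigma_hat n t) by apply sqrt_pos.
  rewrite !neg_ln_P_CH_varphi in Hy by nra.
  pose (F := fun g => INR n * kl_bern t (t - sigma_hat n t * g) - y).
  destruct (IVT_interv_le F a b) as [g [Hg Hgy]]; [lra| |unfold F; lra|].
  - intros g Hg. apply continuity_pt_filterlim, (ex_derive_continuous (V := R_NormedModule)).
    unfold F, kl_bern. auto_derive.
    assert (0 <= sigma_hat n t * g <= sigma_hat n t * b) by (split; nra).
    repeat split; apply Rdiv_lt_0_compat; lra.
  - exists g. split; [exact Hg|]. rewrite neg_ln_P_CH_varphi by nra. unfold F in Hgy. lra.
Qed.

Lemma sqrt_mul_inv_sqrt_pow2 a p : 0 <= a -> 0 < p -> (sqrt a * / sqrt p) ^ 2 * p = a.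
Proof.
  intros Ha Hp. rewrite Rpow_mult_distr, pow_inv, <- !Rsqr_pow2, !Rsqr_sqrt by lra.
  field. lra.
Qed.

Lemma le_of_pow2_mul_le a b k : 0 < k -> 0 <= b -> a ^ 2 * k <= b ^ 2 * k -> a <= b.
Proof.
  intros Hk Hb Hab. apply Rmult_le_reg_r in Hab; [|exact Hk].
  apply Rsqr_incr_0_var; [rewrite !Rsqr_pow2; exact Hab|exact Hb].
Qed.

Section Calibration.

Variables N theta alpha eps sigma : R.
Hypothesis Htheta : 0 < theta < 1.
Hypothesis HN : 0 < N.
Hypothesis Halpha : 0 < alpha.
Hypothesis Heps : 0 < eps.
Hypothesis Hsigma : 0 < sigma.
Hypothesis HN_sigma : N * sigma ^ 2 = theta * (1 - theta).
Hypothesis HN_eps : eps ^ 2 * (N * theta * (1 - theta)) = 25 / 4 * alpha.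
Hypothesis Halpha_small : alpha <= N * theta ^ 2 * (1 - theta) ^ 2 / 8.

Lemma eps_lt_half : eps < 1 / 2.
Proof.
  assert (Hv : 0 < theta * (1 - theta) <= 1 / 4).
  { split; [nra|]. pose proof (pow2_ge_0 (theta - 1 / 2)). nra. }
  assert (eps ^ 2 * (N * (theta * (1 - theta)))
          <= 25 / 32 * (theta * (1 - theta)) * (N * (theta * (1 - theta)))) by nra.
  assert (eps ^ 2 <= 25 / 32 * (theta * (1 - theta))) by nra.
  nra.
Qed.

Lemma sigma_mul_le_of_sq_eq g : 0 <= g -> g ^ 2 * (1 + eps) = 2 * alpha ->
  sigma * g * (1 + eps) <= eps * theta.
Proof.
  intros Hg Hgsq. pose proof eps_lt_half.
  apply (le_of_pow2_mul_le _ _ (N * (theta * (1 - theta)))); [nra|nra|].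
  replace ((sigma * g * (1 + eps)) ^ 2 * (N * (theta * (1 - theta))))
    with ((N * sigma ^ 2) * (g ^ 2 * (1 + eps)) * (1 + eps) * (theta * (1 - theta))) by ring.
  replace ((eps * theta) ^ 2 * (N * (theta * (1 - theta)))) with (25 / 4 * alpha * theta ^ 2) by nra.
  rewrite HN_sigma, Hgsq.
  assert (Hfactor : (1 - theta) ^ 2 * (1 + eps) <= 3 / 2).
  { clear - Htheta Heps H. assert (0 <= (1 - theta) ^ 2 <= 1) by (split; nra). nra. }
  assert (0 < alpha * theta ^ 2) by (apply Rmult_lt_0_compat; [lra|apply pow_lt; lra]).
  replace (theta * (1 - theta) * (2 * alpha) * (1 + eps) * (theta * (1 - theta)))
    with (2 * (alpha * theta ^ 2) * ((1 - theta) ^ 2 * (1 + eps))) by ring.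
  nra.
Qed.

Lemma sigma_mul_le_of_sq_eq_sub g : 0 <= g -> g ^ 2 * (1 - eps) = 2 * alpha ->
  sigma * g * (1 - eps) <= eps * (1 - theta).
Proof.
  intros Hg Hgsq. pose proof eps_lt_half.
  apply (le_of_pow2_mul_le _ _ (N * (theta * (1 - theta)))); [nra|nra|].
  replace ((sigma * g * (1 - eps)) ^ 2 * (N * (theta * (1 - theta))))
    with ((N * sigma ^ 2) * (g ^ 2 * (1 - eps)) * (1 - eps) * (theta * (1 - theta))) by ring.
  replace ((eps * (1 - theta)) ^ 2 * (N * (theta * (1 - theta))))
    with (25 / 4 * alpha * (1 - theta) ^ 2) by nra.
  rewrite HN_sigma, Hgsq.
  assert (Hfactor : theta ^ 2 * (1 - eps) <= 1).
  { clear - Htheta Heps H. assert (0 <= theta ^ 2 <= 1) by (split; nra). nra. }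
  assert (0 < alpha * (1 - theta) ^ 2) by (apply Rmult_lt_0_compat; [lra|apply pow_lt; lra]).
  replace (theta * (1 - theta) * (2 * alpha) * (1 - eps) * (theta * (1 - theta)))
    with (2 * (alpha * (1 - theta) ^ 2) * (theta ^ 2 * (1 - eps))) by ring.
  nra.
Qed.

Lemma sigma_mul_lt_of_sq_eq_sub g : 0 <= g -> g ^ 2 * (1 - eps) = 2 * alpha ->
  sigma * g < theta.
Proof.
  intros Hg Hgsq. pose proof eps_lt_half.
  assert (Hc : theta * (1 - theta) ^ 3 <= 1).
  { clear - Htheta. assert (0 <= (1 - theta) ^ 2 <= 1) by (split; nra).
    replace (theta * (1 - theta) ^ 3) with (theta * (1 - theta) * (1 - theta) ^ 2) by ring.
    assert (0 <= theta * (1 - theta) <= 1) by (split; nra). nra. }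
  assert (Hprod : (sigma * g) ^ 2 * (1 - eps) * N <= theta ^ 2 / 4 * N).
  { replace ((sigma * g) ^ 2 * (1 - eps) * N) with ((N * sigma ^ 2) * (g ^ 2 * (1 - eps))) by ring.
    rewrite HN_sigma, Hgsq.
    apply Rle_trans with (theta ^ 2 * (theta * (1 - theta) ^ 3) / 4 * N).
    - replace (theta ^ 2 * (theta * (1 - theta) ^ 3) / 4 * N)
        with (theta * (1 - theta) * (N * theta ^ 2 * (1 - theta) ^ 2 / 4)) by field.
      apply Rmult_le_compat_l; nra.
    - replace (theta ^ 2 * (theta * (1 - theta) ^ 3) / 4 * N)
        with (theta ^ 2 / 4 * N * (theta * (1 - theta) ^ 3)) by field.
      rewrite <- (Rmult_1_r (theta ^ 2 / 4 * N)) at 2.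
      apply Rmult_le_compat_l; [|exact Hc].
      assert (0 < theta ^ 2) by (apply pow_lt; lra). nra. }
  apply Rmult_le_reg_r in Hprod; [|exact HN].
  assert (0 < theta ^ 2) by (apply pow_lt; lra).
  apply Rsqr_incrst_0; [rewrite !Rsqr_pow2; nra|nra|lra].
Qed.

End Calibration.

Theorem mainTheorem11 (n : nat) (theta alpha : R) :
  (1 <= n)%nat ->
  0 < theta < 1 ->
  (exists k : nat, INR n * theta = INR k) ->
  0 < alpha ->
  alpha <= INR n * theta ^ 2 * (1 - theta) ^ 2 / 8 ->
  let eps := 5 / 2 * sqrt alpha / sqrt (INR n * theta * (1 - theta)) in
  exists gamma : R,
    0 < gamma /\
    - ln (P_CH n theta (varphi n gamma theta)) = alpha /\
    sqrt (2 * alpha) * / sqrt (1 + eps) <= gamma /\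
    gamma <= sqrt (2 * alpha) * / sqrt (1 - eps).
Proof.
  intros Hn Htheta _ Halpha Halpha_small eps.
  assert (HN : 0 < INR n) by (apply lt_0_INR; lia).
  assert (HP : 0 < INR n * theta * (1 - theta))
    by (apply Rmult_lt_0_compat; [apply Rmult_lt_0_compat|]; lra).
  pose proof (sigma_hat_pos n theta Hn Htheta) as Hsigma.
  pose proof (INR_mul_sigma_hat_sq n theta Hn Htheta) as HN_sigma.
  assert (Heps : 0 < eps).
  { apply Rdiv_lt_0_compat; [|now apply sqrt_lt_R0]. pose proof (sqrt_lt_R0 _ Halpha). lra. }
  assert (HN_eps : eps ^ 2 * (INR n * theta * (1 - theta)) = 25 / 4 * alpha).
  { replace (eps ^ 2 * (INR n * theta * (1 - theta))) with
      (25 / 4 * ((sqrt alpha * / sqrt (INR n * theta * (1 - theta))) ^ 2 * (INR n * theta * (1 - theta))))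
      by (unfold eps; field; apply Rgt_not_eq, sqrt_lt_R0, HP).
    now rewrite sqrt_mul_inv_sqrt_pow2 by lra. }
  pose proof (eps_lt_half _ _ _ _ Htheta Halpha HN_eps Halpha_small) as Hhalf.
  set (a := sqrt (2 * alpha) * / sqrt (1 + eps)).
  set (b := sqrt (2 * alpha) * / sqrt (1 - eps)).
  assert (Ha : a ^ 2 * (1 + eps) = 2 * alpha) by (apply sqrt_mul_inv_sqrt_pow2; lra).
  assert (Hb : b ^ 2 * (1 - eps) = 2 * alpha) by (apply sqrt_mul_inv_sqrt_pow2; lra).
  assert (Ha_pos : 0 < a).
  { apply Rmult_lt_0_compat; [|apply Rinv_0_lt_compat]; apply sqrt_lt_R0; lra. }
  assert (Hab : a <= b).
  { apply Rmult_le_compat_l; [apply sqrt_pos|].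
    apply Rinv_le_contravar; [apply sqrt_lt_R0; lra|apply sqrt_le_1_alt; lra]. }
  pose proof (sigma_mul_le_of_sq_eq _ _ _ _ _ Htheta Halpha Heps HN_sigma HN_eps Halpha_small
    a (Rlt_le _ _ Ha_pos) Ha) as Ha_fit.
  pose proof (sigma_mul_le_of_sq_eq_sub _ _ _ _ _ Htheta Halpha Heps HN_sigma HN_eps Halpha_small
    b ltac:(lra) Hb) as Hb_fit.
  pose proof (sigma_mul_lt_of_sq_eq_sub _ _ _ _ _ Htheta HN Halpha Hsigma HN_sigma HN_eps
    Halpha_small b ltac:(lra) Hb) as Hb_lt.
  destruct (neg_ln_P_CH_varphi_intermediate n theta alpha a b) as [g [Hg Hg_eq]];
    [exact Htheta|lra|exact Hb_lt| |].
  - split.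
    + replace alpha with ((1 + eps) * a ^ 2 / 2) by lra.
      apply (neg_ln_P_CH_varphi_le n theta eps a Hn Htheta); [nra|exact Ha_fit].
    + replace alpha with ((1 - eps) * b ^ 2 / 2) by lra.
      apply (neg_ln_P_CH_varphi_ge n theta eps b Hn Htheta); [nra|exact Hb_fit].
  - exists g. repeat split; [lra|exact Hg_eq|apply Hg|apply Hg].
Qed.
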